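(* For an integer $g\ge1$, the number of numerical semigroups of genus $g$ that are both reflective and symmetric equals $1$ if $g=1$, and equals $\tau(g-1)-1$ if $g>1$, where $\tau(n)$ denotes the number of positive divisors of $n$.
   Context: A numerical semigroup is a submonoid $S$ of $(\mathbb{N}_0,+)$ with finite complement; its genus is the number of elements of $\mathbb{N}_0\setminus S$ and $\mathrm{F}(S)$ is its largest gap. $S$ is symmetric if for every $z\in\mathbb{Z}$ exactly one of $z$ and $\mathrm{F}(S)-z$ lies in $S$. A numerical semigroup $S$ of genus $g\ge1$ is called reflective if for every $z\in\{0,1,\dots,g-1\}$ exactly one of $z$ and $z+g$ belongs to $S$. *)

From mathcomp Require Import all_boot all_algebra.
Set Implicit Arguments. Unset Strict Implicit. Unset Printing Implicit Defensive.

Definition is_numsg (S : nat -> bool) : Prop :=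
  [/\ S 0, (forall a b, S a -> S b -> S (a + b)) & exists N, forall n, N <= n -> S n].

(* genus = number of gaps; gaps all lie below some bound N, so count them below N *)
Definition has_genus (S : nat -> bool) (g : nat) : Prop :=
  exists N, (forall n, N <= n -> S n) /\ count (fun n => ~~ S n) (iota 0 N) = g.

Definition is_frobenius (S : nat -> bool) (F : nat) : Prop :=
  ~~ S F /\ forall n, F < n -> S n.

Definition in_S (S : nat -> bool) (z : int) : bool :=
  match z with Posz n => S n | Negz _ => false end.

Definition symmetric_sg (S : nat -> bool) : Prop :=
  exists F, is_frobenius S F /\
    forall z : int, in_S S z (+) in_S S ((Posz F - z)%R).

Definition reflective_sg (S : nat -> bool) (g : nat) : Prop :=
  1 <= g /\ has_genus S g /\ forall z, z < g -> S z (+) S (z + g).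

Definition tau (n : nat) : nat := size (divisors n).

(* "the number of objects S (up to extensional equality) with property P is k":
   an enumeration f 0, ..., f (k-1) of pairwise (extensionally) distinct solutions
   covering every solution up to extensional equality. *)
Definition num_sols (P : (nat -> bool) -> Prop) (k : nat) : Prop :=
  exists f : nat -> (nat -> bool),
    [/\ forall i, i < k -> P (f i),
        forall i j, i < k -> j < k -> i <> j -> exists n, f i n <> f j n
      & forall S, P S -> exists2 i, i < k & forall n, S n = f i n].

From mathcomp Require Import all_boot all_algebra zify.

(* For 1 < d with d | g - 1 let S_d be the set
     { n < g | d | n }  u  { g <= n < 2g | d does not divide n - g }  u  [2g, oo).
   1. Each S_d is a numerical semigroup of genus g which is reflective and
      symmetric with Frobenius number 2g - 1 (section [Sd]).
   2. Conversely let S be reflective and symmetric of genus g.  Reflectivity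
      puts exactly g gaps below 2g, so S contains [2g, oo); symmetry then forces
      F(S) = 2g - 1, and combining the two gives the mirror law
      S z = S (g - 1 - z) for z < g.  The mirror law makes S closed under
      differences inside [0, g), hence equal to the multiples of the least positive
      element d of S; d divides g - 1 (as g - 1 is in S), d > 1 (as g is not),
      and reflectivity recovers S on [g, 2g): S = S_d (section [Classification]).
   3. Distinct divisors give distinct semigroups, so the solutions are counted
      by the divisors d > 1 of g - 1, of which there are tau (g - 1) - 1 when
      g > 1; for g = 1 all S_d coincide and there is exactly one solution. *)

Lemma count_iota_reflect (p : pred nat) m :
  count (fun n => p (m - n)) (iota 0 m.+1) = count p (iota 0 m.+1).
Proof.
elim: m => [|m IH] //.
have iota_rcons : iota 0 m.+2 = iota 0 m.+1 ++ [:: m.+1] by rewrite -addn1 iotaD.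
have iota_cons : iota 0 m.+2 = 0 :: map succn (iota 0 m.+1) by rewrite /= -(iotaDl 1).
rewrite [in RHS]iota_rcons count_cat -IH iota_cons /= count_map subn0 addn0 addnC.
by congr (_ + _).
Qed.

Lemma count_gaps_reflective (P : pred nat) g :
  (forall z, z < g -> P z (+) P (z + g)) ->
  count (fun n => ~~ P n) (iota 0 (2 * g)) = g.
Proof.
move=> Prefl; rewrite mul2n -addnn iotaD count_cat.
have -> : iota (0 + g) g = map (addn g) (iota 0 g) by rewrite -iotaDl addn0.
rewrite count_map -[in RHS](size_iota 0 g) -(count_predC P) addnC.
congr (_ + _); apply: eq_in_count => n; rewrite mem_iota add0n => /andP[_ ltng] /=.
by move: (Prefl n ltng); rewrite addnC; case: (P n); case: (P (g + n)).
Qed.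

(* Symmetry only has to be checked on [0, F]: beyond F everything is in S and
   everything negative is not. *)
Lemma symmetric_of_nat (S : nat -> bool) F :
  is_frobenius S F -> (forall n, n <= F -> S n (+) S (F - n)) ->
  forall z : int, in_S S z (+) in_S S ((Posz F - z)%R).
Proof.
case=> _ S_gtF symS [n|k].
- have [leFn|ltFn] := leqP n F; first by rewrite /= subzn // symS.
  have -> : (Posz F - Posz n)%R = Negz (n - F).-1.
    by rewrite NegzE prednK ?subn_gt0 // -subzn ?GRing.opprB // ltnW.
  by rewrite /= S_gtF.
- by rewrite NegzE GRing.opprK -PoszD /= S_gtF // addnS ltnS leq_addr.
Qed.

Lemma symmetric_nat (S : nat -> bool) F :
  (forall z : int, in_S S z (+) in_S S ((Posz F - z)%R)) ->
  forall n, n <= F -> S n (+) S (F - n).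
Proof. by move=> symS n leqnF; move: (symS (Posz n)); rewrite subzn. Qed.

Definition Sd (g d n : nat) : bool :=
  if n < g then d %| n else if n < 2 * g then ~~ (d %| (n - g)) else true.

Lemma Sd_lo g d n : n < g -> Sd g d n = (d %| n).
Proof. by move=> ltng; rewrite /Sd ltng. Qed.

Lemma Sd_mid g d n : g <= n < 2 * g -> Sd g d n = ~~ (d %| (n - g)).
Proof. by case/andP=> legn ltn2g; rewrite /Sd ltn2g ltnNge legn. Qed.

Lemma Sd_hi g d n : 2 * g <= n -> Sd g d n.
Proof. by move=> le2gn; rewrite /Sd !ifF //; apply/negbTE; rewrite -leqNgt //; lia. Qed.

Lemma Sd_genus1 d n : Sd 1 d n = Sd 1 2 n.
Proof. by case: n => [|[|n]]; rewrite /Sd //= !dvdn0. Qed.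

Lemma Sd_separate g d e : 0 < d < e -> d < g -> Sd g d d <> Sd g e d.
Proof.
case/andP=> d_gt0 ltde ltdg; rewrite !Sd_lo // dvdnn => /esym/(dvdn_leq d_gt0).
by rewrite leqNgt ltde.
Qed.

Section Sd.
Variables (g d : nat).

(* Since g = 1 modulo d, no multiple x >= g of d has d | x - g. *)
Lemma Sd_not_shift x :
  0 < g -> 1 < d -> d %| g.-1 -> d %| x -> g <= x -> ~~ (d %| x - g).
Proof.
move=> g_gt0 d_gt1 d_dvd dx legx; apply/negP => dxg.
have dx1 : d %| x.-1.
  have -> : x.-1 = x - g + g.-1 by lia.
  by rewrite dvdn_add.
have : d %| x.-1 + 1 by rewrite addn1 prednK //; lia.
by rewrite dvdn_addr // dvdn1 => /eqP d1; move: d_gt1; rewrite d1.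
Qed.

Lemma Sd_add a b :
  0 < g -> 1 < d -> d %| g.-1 -> Sd g d a -> Sd g d b -> Sd g d (a + b).
Proof.
move=> g_gt0 d_gt1 d_dvd.
have [le2g|lt2g] := leqP (2 * g) (a + b); first by move=> _ _; apply: Sd_hi.
have [ltag|leag] := ltnP a g; have [ltbg|lebg] := ltnP b g.
- rewrite (Sd_lo _ _ _ ltag) (Sd_lo _ _ _ ltbg) => da db.
  have [ltabg|leabg] := ltnP (a + b) g; first by rewrite Sd_lo // dvdn_add.
  by rewrite Sd_mid ?leabg //; apply: Sd_not_shift; rewrite ?dvdn_add.
- rewrite (Sd_lo _ _ _ ltag) (Sd_mid _ _ b); last by lia.
  rewrite Sd_mid; last by lia.
  by move=> da; rewrite -addnBA // dvdn_addr.
- rewrite (Sd_lo _ _ _ ltbg) (Sd_mid _ _ a); last by lia.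
  rewrite Sd_mid; last by lia.
  by move=> db da; rewrite addnC -addnBA // dvdn_addr.
- lia.
Qed.

Lemma Sd_reflective_cond z : z < g -> Sd g d z (+) Sd g d (z + g).
Proof.
move=> ltzg; rewrite Sd_lo // Sd_mid; last by lia.
by rewrite addnK; case: (d %| z).
Qed.

Lemma Sd_numsg : 0 < g -> 1 < d -> d %| g.-1 -> is_numsg (Sd g d).
Proof.
move=> g_gt0 d_gt1 d_dvd.
split; [by rewrite Sd_lo | by move=> a b; apply: Sd_add | by exists (2 * g) => n; apply: Sd_hi].
Qed.

Lemma Sd_genus : has_genus (Sd g d) g.
Proof.
exists (2 * g); split; first exact: Sd_hi.
exact/count_gaps_reflective/Sd_reflective_cond.
Qed.

Lemma Sd_reflective : 0 < g -> reflective_sg (Sd g d) g.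
Proof. by split; [|split; [exact: Sd_genus | exact: Sd_reflective_cond]]. Qed.

Lemma Sd_frobenius : 0 < g -> d %| g.-1 -> is_frobenius (Sd g d) (2 * g).-1.
Proof.
move=> g_gt0 d_dvd; split; last by move=> n ltn; apply: Sd_hi; lia.
rewrite Sd_mid; last by lia.
have -> : (2 * g).-1 - g = g.-1 by lia.
by rewrite negbK.
Qed.

(* On [0, g) the reflection n |-> g - 1 - n preserves divisibility by d. *)
Lemma Sd_symmetric : 0 < g -> d %| g.-1 -> symmetric_sg (Sd g d).
Proof.
move=> g_gt0 d_dvd; have frob := Sd_frobenius g_gt0 d_dvd.
exists (2 * g).-1; split=> //; apply: symmetric_of_nat => // n len.
have [ltng|legn] := ltnP n g.
- rewrite Sd_lo // Sd_mid; last by lia.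
  have -> : (2 * g).-1 - n - g = g.-1 - n by lia.
  by rewrite (dvdn_subr _ d_dvd); [case: (d %| n) | lia].
- rewrite Sd_mid; last by lia.
  rewrite Sd_lo; last by lia.
  have -> : (2 * g).-1 - n = g.-1 - (n - g) by lia.
  by rewrite (dvdn_subr _ d_dvd); [case: (d %| n - g) | lia].
Qed.

Lemma Sd_solution : 0 < g -> 1 < d -> d %| g.-1 ->
  [/\ is_numsg (Sd g d), has_genus (Sd g d) g, reflective_sg (Sd g d) g
    & symmetric_sg (Sd g d)].
Proof.
move=> g_gt0 d_gt1 d_dvd.
by split; [exact: Sd_numsg | exact: Sd_genus | exact: Sd_reflective | exact: Sd_symmetric].
Qed.

End Sd.

Lemma numsg_mul (S : nat -> bool) d : is_numsg S -> S d -> forall k, S (k * d).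
Proof.
case=> S0 S_add _ S_d; elim=> [|k IH]; first by rewrite mul0n.
by rewrite mulSnr S_add.
Qed.

Lemma reflective_large (S : nat -> bool) g n :
  has_genus S g -> (forall z, z < g -> S z (+) S (z + g)) -> 2 * g <= n -> S n.
Proof.
case=> N [S_geN countN] reflS le2gn; apply/negPn/negP => Sn.
have ltnN : n < N by rewrite ltnNge; apply: contraL Sn => /S_geN ->.
have splitN : N = 2 * g + (N - 2 * g) by lia.
move: countN; rewrite {1}splitN iotaD count_cat count_gaps_reflective // add0n.
have : 0 < count (fun n => ~~ S n) (iota (2 * g) (N - 2 * g)).
  by rewrite -has_count; apply/hasP; exists n; rewrite // mem_iota le2gn -splitN.
lia.
Qed.

Section Classification.
Variables (S : nat -> bool) (g F : nat).
Hypotheses (g_gt0 : 0 < g) (numS : is_numsg S) (genS : has_genus S g)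
  (reflS : forall z, z < g -> S z (+) S (z + g)) (frobS : is_frobenius S F)
  (symS : forall n, n <= F -> S n (+) S (F - n)).

Let S0 : S 0. Proof. by case: numS. Qed.
Let S_add a b : S a -> S b -> S (a + b). Proof. by case: numS => _ addS _; apply: addS. Qed.
Let S_large n : 2 * g <= n -> S n. Proof. exact: reflective_large. Qed.

(* Symmetry pairs gaps with elements in [0, F], so F + 1 = 2g. *)
Lemma frobenius_eq : F = (2 * g).-1.
Proof.
case: frobS => SF S_gtF.
have ltF2g : F < 2 * g by rewrite ltnNge; apply: contraL SF => /S_large ->.
have gaps_le_F : count (fun n => ~~ S n) (iota 0 F.+1) = g.
  rewrite -(count_gaps_reflective _ _ reflS) -(subnKC ltF2g) iotaD count_cat.
  rewrite (@eq_in_count _ _ pred0 (iota (0 + F.+1) _)) ?count_pred0 ?addn0 // => n.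
  by rewrite mem_iota => /andP[ltFn _] /=; rewrite S_gtF.
have gaps_elts : count (fun n => ~~ S n) (iota 0 F.+1) = count S (iota 0 F.+1).
  rewrite -count_iota_reflect; apply: eq_in_count => n; rewrite mem_iota => /andP[_ lenF].
  by move: (symS n lenF); case: (S n); case: (S (F - n)).
have elts_le_F : count S (iota 0 F.+1) = g by rewrite -gaps_elts.
have := count_predC S (iota 0 F.+1).
by rewrite size_iota elts_le_F [count (predC S) _]gaps_le_F; lia.
Qed.

(* Symmetry and reflectivity together mirror [0, g) onto itself. *)
Lemma S_mirror z : z < g -> S z = S (g.-1 - z).
Proof.
move=> ltzg; have /symS : z <= F by rewrite frobenius_eq; lia.
rewrite frobenius_eq (_ : (2 * g).-1 - z = g.-1 - z + g); last by lia.
have /reflS : g.-1 - z < g by lia.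
by case: (S z); case: (S (g.-1 - z)); case: (S (g.-1 - z + g)).
Qed.

Lemma S_sub a b : a <= b -> b < g -> S a -> S b -> S (b - a).
Proof.
move=> leab ltbg Sa Sb.
have Sb' : S (g.-1 - b) by rewrite -S_mirror.
have := S_add _ _ Sb' Sa; rewrite S_mirror; last by lia.
by have -> : g.-1 - (g.-1 - b + a) = b - a by lia.
Qed.

(* Closure under differences makes S, inside [0, g), the set of multiples of
   its least positive element d (Euclidean division by d stays in S). *)
Lemma S_low_multiples d : 0 < d -> S d -> (forall n, 0 < n -> S n -> d <= n) ->
  forall z, z < g -> S z = (d %| z).
Proof.
move=> d_gt0 S_d d_min z ltzg; apply/idP/idP; last by move/divnK <-; apply: numsg_mul.
move=> Sz.
have S_down k : k * d <= z -> S (z - k * d).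
  elim: k => [|k IH] lekz; first by rewrite mul0n subn0.
  rewrite mulSnr in lekz *; rewrite subnDA.
  by apply: S_sub => //; [lia | lia | apply: IH; lia].
have := S_down _ (leq_trunc_div z d); rewrite {1}(divn_eq z d) addKn => Smod.
apply/eqP; case: (posnP (z %% d)) => // mod_gt0.
by have := d_min _ mod_gt0 Smod; rewrite leqNgt ltn_pmod.
Qed.

Theorem reflective_symmetric_classification :
  exists d, [/\ 1 < d, d %| g.-1 & forall n, S n = Sd g d n].
Proof.
have exP : exists n, (0 < n) && S n by exists (2 * g); rewrite S_large ?andbT; lia.
case: (ex_minnP exP) => d /andP[d_gt0 S_d] d_min.
have d_least n : 0 < n -> S n -> d <= n by move=> n_gt0 Sn; apply: d_min; rewrite n_gt0.
have lowS := S_low_multiples _ d_gt0 S_d d_least.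
have Sg1 : S g.-1 by rewrite -(subn0 g.-1) -S_mirror.
have d_dvd : d %| g.-1 by rewrite -lowS //; lia.
exists d; split=> //.
- rewrite ltn_neqAle d_gt0 andbT; apply: contraTneq (reflS _ g_gt0) => d1.
  by have := S_add _ _ Sg1 S_d; rewrite -d1 addn1 prednK // S0 add0n => ->.
- move=> n; have [ltng|legn] := ltnP n g; first by rewrite lowS // Sd_lo.
  have [ltn2g|le2gn] := ltnP n (2 * g); last by rewrite S_large // Sd_hi.
  rewrite Sd_mid ?legn // -lowS; last by lia.
  have /reflS : n - g < g by lia.
  by rewrite subnK //; case: (S n); case: (S (n - g)).
Qed.

End Classification.

Lemma solution_is_Sd (g : nat) (S : nat -> bool) : 0 < g ->
  [/\ is_numsg S, has_genus S g, reflective_sg S g & symmetric_sg S] ->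
  exists d, [/\ 1 < d, d %| g.-1 & forall n, S n = Sd g d n].
Proof.
move=> g_gt0 [numS genS [_ [_ reflS]] [F [frobS symS]]].
exact: (reflective_symmetric_classification S g F g_gt0 numS genS reflS frobS
  (symmetric_nat _ _ symS)).
Qed.

Lemma num_sols_list (A : eqType) (P : (nat -> bool) -> Prop) (T : A -> nat -> bool)
    (L : seq A) (a0 : A) :
  uniq L -> (forall a b, a \in L -> b \in L -> a != b -> exists n, T a n <> T b n) ->
  (forall a, a \in L -> P (T a)) ->
  (forall S, P S -> exists2 a, a \in L & forall n, S n = T a n) ->
  num_sols P (size L).
Proof.
move=> uniqL sepT solT coverT; exists (fun i => T (nth a0 L i)); split.
- by move=> i ltiL; apply/solT/mem_nth.
- by move=> i j ltiL ltjL neij; apply: sepT; rewrite ?mem_nth ?nth_uniq //; apply/eqP.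
- move=> S /coverT[a aL Sa]; exists (index a L); first by rewrite index_mem.
  by move=> n; rewrite nth_index.
Qed.

Definition proper_divisors (n : nat) : seq nat := [seq d <- divisors n | 1 < d].

Lemma mem_proper_divisors n d : 0 < n -> (d \in proper_divisors n) = (1 < d) && (d %| n).
Proof. by move=> n_gt0; rewrite mem_filter dvdn_divisors. Qed.

(* Among the divisors of n > 0, only 1 is at most 1. *)
Lemma size_proper_divisors n : 0 < n -> size (proper_divisors n) = (tau n).-1.
Proof.
move=> n_gt0; rewrite size_filter /tau -(count_predC (fun d => 1 < d)).
have -> : count (predC (fun d => 1 < d)) (divisors n) = count_mem 1 (divisors n).
  apply: eq_in_count => d; rewrite -dvdn_divisors // /= -leqNgt.
  by case: d => [|[|d]] //; rewrite dvd0n => /eqP n0; move: n_gt0; rewrite n0.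
by rewrite count_uniq_mem ?divisors_uniq // -dvdn_divisors // dvd1n addn1.
Qed.

Theorem mainTheorem16 (g : nat) : 1 <= g ->
  num_sols (fun S => [/\ is_numsg S, has_genus S g, reflective_sg S g & symmetric_sg S])
           (if g == 1 then 1 else (tau g.-1).-1).
Proof.
move=> g_gt0; have classify S := @solution_is_Sd g S g_gt0.
case: (eqVneq g 1) => [g1|gn1].
  (* g = 1: every S_d equals S_2, so there is exactly one solution. *)
  subst g; apply: (num_sols_list _ _ (Sd 1) [:: 2] 0) => // [a b|a|S /classify[d [_ _ S_eq]]].
  - by rewrite !inE => /eqP-> /eqP->; rewrite eqxx.
  - by rewrite inE => /eqP->; exact: Sd_solution.
  - by exists 2; rewrite ?inE // => n; rewrite S_eq Sd_genus1.
have g1_gt0 : 0 < g.-1 by lia.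
rewrite -size_proper_divisors //.
apply: (num_sols_list _ _ (Sd g) _ 0) => [|a b|a|S /classify[d [d_gt1 d_dvd S_eq]]].
- exact/filter_uniq/divisors_uniq.
- rewrite !mem_proper_divisors // => /andP[a_gt1 a_dvd] /andP[b_gt1 b_dvd] neab.
  have a_lt : a < g by have := dvdn_leq g1_gt0 a_dvd; lia.
  have b_lt : b < g by have := dvdn_leq g1_gt0 b_dvd; lia.
  case: (ltngtP a b) neab => [ltab|ltba|->]; rewrite ?eqxx // => _.
  + by exists a; apply: Sd_separate; rewrite ?ltab; lia.
  + by exists b => /esym; apply: Sd_separate; rewrite ?ltba; lia.
- by rewrite mem_proper_divisors // => /andP[a_gt1 a_dvd]; exact: Sd_solution.
- by exists d; rewrite ?mem_proper_divisors ?d_gt1.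
Qed.
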